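(* Let $Q_1,Q_2\in\{0,1\}^{3\times3}$ with $\mathrm{supp}(Q_1)=\{(1,2),(2,1),(3,3)\}$ and $\mathrm{supp}(Q_2)=\{(1,2),(2,3),(3,1)\}$. The class $\mathrm{Av}(\{Q_1,Q_2\})=\mathrm{Av}(Q_1)\cap\mathrm{Av}(Q_2)$ is bounded.
   Context: All matrices are binary; rows numbered top to bottom, columns left to right; $(i,j)$ is the entry in row $i$, column $j$; $\mathrm{supp}$ is the set of 1-entries; $(a,b]=\{a+1,\dots,b\}$. A pattern $P\in\{0,1\}^{k\times\ell}$ is an interval minor of $M\in\{0,1\}^{m\times n}$ if there are integers $0=r_0<\dots<r_k=m$ and $0=c_0<\dots<c_\ell=n$ such that for each 1-entry $(i,j)$ of $P$ the submatrix of $M$ on rows $(r_{i-1},r_i]$ and columns $(c_{j-1},c_j]$ contains a 1-entry; otherwise $M$ avoids $P$. For a set $\mathcal F$ of patterns, $\mathrm{Av}(\mathcal F)$ is the set of binary matrices avoiding every pattern of $\mathcal F$. $M\in\mathcal C$ is critical for $\mathcal C$ if changing any single 0-entry of $M$ into a 1-entry yields a matrix not in $\mathcal C$. A 0-run is a maximal set of consecutive 0-entries within a single row or a single column; the complexity of a line is the number of 0-runs in it. $\mathcal C$ is bounded if the supremum over all matrices critical for $\mathcal C$ of the maximum complexity of any of their lines (rows and columns) is finite. *)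

(* Binary matrices are 'M[bool]_(m, n); entries are 0-indexed. *)
From mathcomp Require Import all_boot matrix.
Set Implicit Arguments. Unset Strict Implicit. Unset Printing Implicit Defensive.

Definition interval_minor k l (P : 'M[bool]_(k, l)) m n (M : 'M[bool]_(m, n)) : Prop :=
  exists r c : nat -> nat,
    [/\ r 0 = 0, r k = m & (forall i, i < k -> r i < r i.+1)] /\
    [/\ c 0 = 0, c l = n & (forall j, j < l -> c j < c j.+1)] /\
    forall (i : 'I_k) (j : 'I_l), P i j ->
      exists (a : 'I_m) (b : 'I_n),
        [/\ r i <= a < r i.+1, c j <= b < c j.+1 & M a b].

Record pattern := Pattern { pk : nat; pl : nat; pmx : 'M[bool]_(pk, pl) }.

Definition mclass := forall m n, 'M[bool]_(m, n) -> Prop.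

Definition Av (F : seq pattern) : mclass :=
  fun m n M => forall i, i < size F ->
    ~ interval_minor (pmx (nth (Pattern (const_mx false : 'M[bool]_(0,0))) F i)) M.

Definition set1 m n (M : 'M[bool]_(m, n)) (i : 'I_m) (j : 'I_n) : 'M[bool]_(m, n) :=
  \matrix_(a, b) (if (a == i) && (b == j) then true else M a b).

Definition critical (C : mclass) m n (M : 'M[bool]_(m, n)) : Prop :=
  C m n M /\ forall i j, M i j = false -> ~ C m n (set1 M i j).

(* number of maximal runs of 0-entries (false) in a line *)
Fixpoint zruns_aux (prev_zero : bool) (s : seq bool) : nat :=
  match s with
  | [::] => 0
  | b :: s' => (if ~~ b && ~~ prev_zero then 1 else 0) + zruns_aux (~~ b) s'
  end.
Definition complexity (s : seq bool) : nat := zruns_aux false s.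

Definition row_line m n (M : 'M[bool]_(m, n)) (i : 'I_m) : seq bool :=
  [seq M i j | j <- enum 'I_n].
Definition col_line m n (M : 'M[bool]_(m, n)) (j : 'I_n) : seq bool :=
  [seq M i j | i <- enum 'I_m].

Definition bounded (C : mclass) : Prop :=
  exists B : nat, forall m n (M : 'M[bool]_(m, n)), critical C M ->
    (forall i, complexity (row_line M i) <= B) /\
    (forall j, complexity (col_line M j) <= B).

(* 3x3 patterns from their supports, given 1-indexed *)
Definition mx_of_supp (S : seq (nat * nat)) : 'M[bool]_(3, 3) :=
  \matrix_(i, j) ((i.+1, j.+1) \in S).

Definition Q1 : 'M[bool]_(3, 3) := mx_of_supp [:: (1, 2); (2, 1); (3, 3)].
Definition Q2 : 'M[bool]_(3, 3) := mx_of_supp [:: (1, 2); (2, 3); (3, 1)].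

From Pilot Require Import Defs.
From mathcomp Require Import all_boot matrix zify.
From Stdlib Require Import Classical.
Set Implicit Arguments. Unset Strict Implicit. Unset Printing Implicit Defensive.

(* Call fork a 1-entry together with two 1-entries below it, in distinct rows,
   one strictly to its left and one strictly to its right: Q1 and Q2 are the two
   forks of size 3, so Av(Q1, Q2) is the class of fork-free matrices.  In a
   critical fork-free matrix every 0-entry, turned into a 1, becomes the apex or
   a foot of a fork.  A 0 between two 1s of its row cannot become a foot, so it
   becomes an apex.  In a row 1 0 1 1 0 1 the left foot for the second 0 is not
   left of the third 1 (or the third 1 is already an apex), and then the second
   1 is the apex of a fork with the left foot for the first 0 and one of the two
   feet for the second 0.  In a column 1 0 1 1 the 0 becomes an apex (then so
   is the top 1) or a foot, whose role can be taken by one of the two 1s below.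
   Hence no line has more than four runs of zeros. *)

Definition fork m n (M : 'M[bool]_(m, n)) : Prop :=
  exists (a b c : 'I_m) (x y z : 'I_n),
    [/\ a < b, a < c, b != c :> nat & x < y < z] /\ [/\ M a y, M b x & M c z].

Lemma forkI m n (M : 'M[bool]_(m, n)) (a b c : 'I_m) (x y z : 'I_n) :
  M a y -> M b x -> M c z -> a < b -> a < c -> b != c :> nat ->
  (x < y < z) || (z < y < x) -> fork M.
Proof.
move=> May Mbx Mcz ab ac bc /orP[xyz|zyx]; first by exists a, b, c, x, y, z.
by exists a, c, b, z, y, x; rewrite eq_sym.
Qed.

Lemma sorted_cuts m k (s : seq nat) :
  size s = k.+1 -> sorted ltn s -> all (gtn m) s ->
  exists r : nat -> nat,
    [/\ r 0 = 0, r k.+1 = m & forall i, i < k.+1 -> r i < r i.+1] /\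
    forall i, i < k.+1 -> r i <= nth 0 s i < r i.+1.
Proof.
move=> size_s sorted_s /allP s_lt_m.
have s_incr i : i < k -> nth 0 s i < nth 0 s i.+1.
  by move=> ik; apply: (sorted_ltn_nth ltn_trans) => //; rewrite inE; lia.
have s_lt i : i < k.+1 -> nth 0 s i < m.
  by move=> ik; apply: s_lt_m; rewrite mem_nth // size_s.
exists (fun t => if t == 0 then 0 else if t <= k then (nth 0 s t.-1).+1 else m).
split; [split=> // [|i ik] | move=> i ik]; first by rewrite ltnn.
all: have := s_lt i; have := s_incr i.-1.
all: by case: i ik => [|i] ik /=; repeat case: ifP; lia.
Qed.

Lemma interval_minor_grid k l (P : 'M[bool]_(k.+1, l.+1)) m n (M : 'M[bool]_(m, n))
    (rows : k.+1.-tuple 'I_m) (cols : l.+1.-tuple 'I_n) :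
  sorted ltn (map val rows) -> sorted ltn (map val cols) ->
  (forall i j, P i j -> M (tnth rows i) (tnth cols j)) -> interval_minor P M.
Proof.
move=> sorted_rows sorted_cols grid.
have in_range p (t : seq 'I_p) : all (gtn p) (map val t).
  by apply/allP => _ /mapP [a _ ->]; exact: ltn_ord.
have size_vals p q (t : q.-tuple 'I_p) : size (map val t) = q by rewrite size_map size_tuple.
have [r [r_cuts r_blocks]] := sorted_cuts (size_vals _ _ rows) sorted_rows (in_range _ _).
have [c [c_cuts c_blocks]] := sorted_cuts (size_vals _ _ cols) sorted_cols (in_range _ _).
exists r, c; do 2!split=> //; move=> i j Pij.
exists (tnth rows i), (tnth cols j); split; last exact: grid.
- by rewrite (tnth_nth (tnth rows i)) -(nth_map _ 0) ?size_tuple //; exact: r_blocks.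
- by rewrite (tnth_nth (tnth cols j)) -(nth_map _ 0) ?size_tuple //; exact: c_blocks.
Qed.

Lemma fork_of_interval_minor (P : 'M[bool]_(3, 3)) m n (M : 'M[bool]_(m, n)) :
  P ord0 (inord 1) ->
  P (inord 1) ord0 && P (inord 2) (inord 2) || P (inord 1) (inord 2) && P (inord 2) ord0 ->
  interval_minor P M -> fork M.
Proof.
move=> P01 feet [r [c [[r0 _ _] [[c0 _ _] blocks]]]].
have [a [y [ra cy May]]] := blocks _ _ P01.
case/orP: feet => /andP[P1 P2].
  have [b [x [rb cx Mbx]]] := blocks _ _ P1; have [b' [z [rb' cz Mbz]]] := blocks _ _ P2.
  rewrite !inordK //= in ra cy rb cx rb' cz.
  by apply: (forkI May Mbx Mbz); lia.
have [b [z [rb cz Mbz]]] := blocks _ _ P1; have [b' [x [rb' cx Mbx]]] := blocks _ _ P2.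
rewrite !inordK //= in ra cy rb cx rb' cz.
by apply: (forkI May Mbz Mbx); lia.
Qed.

Lemma interval_minor_of_fork m n (M : 'M[bool]_(m, n)) :
  fork M -> interval_minor Q1 M \/ interval_minor Q2 M.
Proof.
move=> [a [b [c [x [y [z [[ab ac bc /andP[xy yz]] [May Mbx Mcz]]]]]]]].
have sorted_cols : sorted ltn (map val [tuple x; y; z]) by rewrite /= xy yz.
case: (ltngtP b c) => [bc'|cb|/eqP]; last by rewrite (negPf bc).
- left; apply: (interval_minor_grid (rows := [tuple a; b; c]) _ sorted_cols).
    by rewrite /= ab bc'.
  by move=> [[|[|[|?]]] ?] [[|[|[|?]]] ?]; rewrite /Q1 /mx_of_supp mxE.
- right; apply: (interval_minor_grid (rows := [tuple a; c; b]) _ sorted_cols).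
    by rewrite /= ac cb.
  by move=> [[|[|[|?]]] ?] [[|[|[|?]]] ?]; rewrite /Q2 /mx_of_supp mxE.
Qed.

Lemma Av_Q1Q2_fork m n (M : 'M[bool]_(m, n)) :
  Av [:: Pattern Q1; Pattern Q2] M <-> ~ fork M.
Proof.
split=> [avoid /interval_minor_of_fork [Q1M|Q2M] | no_fork [|[|i]] //= _].
- exact: (avoid 0).
- exact: (avoid 1).
- move=> Q1M; apply/no_fork/(fork_of_interval_minor _ _ Q1M);
  by rewrite /Q1 /mx_of_supp !mxE ?inordK.
- move=> Q2M; apply/no_fork/(fork_of_interval_minor _ _ Q2M);
  by rewrite /Q2 /mx_of_supp !mxE ?inordK.
Qed.

Fixpoint alternating k : seq bool :=
  if k is k'.+1 then [:: false, true & alternating k'] else [:: false].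

Lemma zruns_aux_subseq s k :
  (k < zruns_aux false s -> subseq (alternating k) s) /\
  (k < zruns_aux true s -> subseq (true :: alternating k) s).
Proof.
elim: s k => [|[] s IH] k //=; rewrite ?add0n.
- split=> [/(IH k).1 sub|/(IH k).1 //].
  exact: subseq_trans sub (subseq_cons _ _).
- case: k => [|k]; split=> /=.
  + by rewrite sub0seq.
  + exact: (IH 0).2.
  + exact: (IH k).2.
  + exact: (IH k.+1).2.
Qed.

Lemma complexity_leq_avoid (s t : seq bool) k :
  subseq t (alternating k) -> ~ subseq t s -> complexity s <= k.
Proof.
move=> t_alt t_s; rewrite leqNgt; apply/negP => /(zruns_aux_subseq s k).1 alt_s.
exact/t_s/(subseq_trans t_alt alt_s).
Qed.

Lemma subseq_map_enum_ord n (T : eqType) (f : 'I_n -> T) t :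
  subseq t [seq f j | j <- enum 'I_n] ->
  exists2 s : seq 'I_n, sorted ltn (map val s) & t = map f s.
Proof.
case/subseqP => mask_t _ ->; exists (mask mask_t (enum 'I_n)); last by rewrite map_mask.
rewrite map_mask val_enum_ord.
by apply: (subseq_sorted ltn_trans (mask_subseq _ _)); exact: iota_ltn_sorted.
Qed.

Lemma set1E m n (M : 'M[bool]_(m, n)) i j u v :
  Defs.set1 M i j u v = (u == i :> nat) && (v == j :> nat) || M u v.
Proof. by rewrite mxE; case: ifP. Qed.

Section CriticalForkFree.

Variables (m n : nat) (M : 'M[bool]_(m, n)).
Hypothesis fork_free : ~ fork M.
Hypothesis saturated : forall i j, M i j = false -> fork (Defs.set1 M i j).

Definition apex_site (i : 'I_m) (j : 'I_n) :=
  exists (b c : 'I_m) (x z : 'I_n),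
    [/\ i < b, i < c, b != c :> nat, x < j < z & M b x && M c z].

Definition foot_site (i : 'I_m) (j : 'I_n) :=
  exists (a c : 'I_m) (y w : 'I_n),
    [/\ a < i, a < c, c != i :> nat, (j < y < w) || (w < y < j) & M a y && M c w].

Lemma fork_set1 i j : fork (Defs.set1 M i j) -> apex_site i j \/ foot_site i j.
Proof.
move=> [a [b [c [x [y [z [[ab ac bc xyz] []]]]]]]].
rewrite !set1E => /orP[/andP[/eqP ai /eqP yj]|May] /orP[/andP[/eqP bi /eqP xj]|Mbx]
  /orP[/andP[/eqP ci /eqP zj]|Mcz]; try lia.
- by left; exists b, c, x, z; rewrite Mbx Mcz; split; lia.
- by right; exists a, c, y, z; rewrite May Mcz; split; lia.
- by right; exists a, b, y, x; rewrite May Mbx; split; lia.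
- by case: fork_free; exists a, b, c, x, y, z.
Qed.

Lemma foot_site_flanked i (j p q : 'I_n) :
  p < j -> j < q -> M i p -> M i q -> ~ foot_site i j.
Proof.
move=> pj jq Mip Miq [a [c [y [w [ai ac ci /orP[jyw|wyj] /andP[May Mcw]]]]]]; apply: fork_free.
  by apply: (forkI May Mip Mcw); lia.
by apply: (forkI May Mcw Miq); lia.
Qed.

Lemma apex_site_flanked i (j p q : 'I_n) :
  p < j -> j < q -> M i p -> M i q -> M i j = false -> apex_site i j.
Proof.
move=> pj jq Mip Miq /saturated/fork_set1[] // foot.
by case: (foot_site_flanked pj jq Mip Miq foot).
Qed.

Lemma row_line_avoid i : ~ subseq [:: true; false; true; true; false; true] (row_line M i).
Proof.
case/subseq_map_enum_ord => -[|p0 [|j0 [|p1 [|p2 [|j2 [|p3 [|? ?]]]]]]] //=.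
move=> /and5P[p0j0 j0p1 p1p2 p2j2 /andP[j2p3 _]].
case=> /esym Mp0 /esym Mj0 /esym Mp1 /esym Mp2 /esym Mj2 /esym Mp3.
have [b0 [_ [x0 [_ [ib0 _ _ /andP[x0j0 _] /andP[Mb0 _]]]]]] :=
  apex_site_flanked p0j0 j0p1 Mp0 Mp1 Mj0.
have [b2 [c2 [x2 [z2 [ib2 ic2 bc2 /andP[x2j2 j2z2] /andP[Mb2 Mc2]]]]]] :=
  apex_site_flanked p2j2 j2p3 Mp2 Mp3 Mj2.
have p2z2 := ltn_trans p2j2 j2z2.
apply: fork_free; case: (ltnP x2 p2) => [x2p2|p2x2].
  by apply: (forkI Mp2 Mb2 Mc2); rewrite ?x2p2 ?p2z2.
have x0p1 := ltn_trans x0j0 j0p1; have p1z2 := ltn_trans p1p2 p2z2.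
have [b0b2|b0b2] := eqVneq (b0 : nat) b2.
  by apply: (forkI Mp1 Mb0 Mc2); rewrite ?b0b2 ?x0p1 ?p1z2.
by apply: (forkI Mp1 Mb0 Mb2); rewrite ?x0p1 ?(leq_trans p1p2 p2x2).
Qed.

Lemma col_line_avoid j : ~ subseq [:: true; false; true; true] (col_line M j).
Proof.
case/subseq_map_enum_ord => -[|p [|i [|q [|q' [|? ?]]]]] //=.
move=> /and3P[pi iq /andP[qq' _]] [/esym Mp /esym Mi /esym Mq /esym Mq'].
apply: fork_free; case/saturated/fork_set1: Mi.
  move=> [b [c [x [z [ib ic bc xjz /andP[Mb Mc]]]]]].
  by apply: (forkI Mp Mb Mc); rewrite ?(ltn_trans pi ib) ?(ltn_trans pi ic) ?xjz.
move=> [a [c [y [w [ai ac ci jyw /andP[May Mcw]]]]]].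
have aq := ltn_trans ai iq.
have [cq|cq] := eqVneq (c : nat) q.
  by apply: (forkI May Mq' Mcw); rewrite ?(ltn_trans aq qq') ?cq ?(gtn_eqF qq').
by apply: (forkI May Mq Mcw); rewrite // eq_sym.
Qed.

End CriticalForkFree.

Theorem proposition4p3 :
  bounded (Av [:: Pattern Q1; Pattern Q2]).
Proof.
exists 4 => m n M [avoid maximal].
have fork_free : ~ fork M by apply/Av_Q1Q2_fork.
have saturated i j : M i j = false -> fork (Defs.set1 M i j).
  by move=> Mij; apply: NNPP => /Av_Q1Q2_fork; exact: maximal.
split=> [i|j].
- apply: (complexity_leq_avoid (t := [:: true; false; true; true; false; true])) => //.
  exact: (row_line_avoid fork_free saturated).
- apply: (complexity_leq_avoid (t := [:: true; false; true; true])) => //.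
  exact: (col_line_avoid fork_free saturated).
Qed.
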